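(* Let $D=(V,E;s,t)$, $N$ be as in the context, let $x\in\mathcal{C}(\widetilde\Gamma_D)$ and let $e\in N$. If there exists a maximum-cardinality family of $s$-$t$ paths pairwise disjoint on $N$ none of whose paths contains $e$, then $x(e)=0$.
   Context: $D=(V,E;s,t)$ is a directed network with unit arc capacities (parallel arcs allowed); $N\subseteq E$ is the set of private arcs (players), $M=E\setminus N$ public arcs; every $s$-$t$ path contains an arc of $N$ and every arc lies on some $s$-$t$ path. Two paths are disjoint on $N$ if they share no arc of $N$; $\sigma_N$ is the maximum number of $s$-$t$ paths pairwise disjoint on $N$. For $S\subseteq N$, $\gamma(S)$ is the maximum number of pairwise arc-disjoint $s$-$t$ paths in $D_S=(V,S\cup M;s,t)$. The auxiliary game $\widetilde\Gamma_D=(N,\tilde\gamma)$ has $\tilde\gamma(N)=\sigma_N$ and $\tilde\gamma(S)=\gamma(S)$ for $S\subsetneq N$; its core is $\mathcal{C}(\widetilde\Gamma_D)=\{x\in\mathbb{R}^N_{\ge0}:x(N)=\sigma_N,\ x(S)\ge\tilde\gamma(S)\ \forall S\subseteq N\}$, with $x(S)=\sum_{i\in S}x_i$. *)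

From HB Require Import structures.
From mathcomp Require Import all_boot all_order all_algebra.
Set Implicit Arguments. Unset Strict Implicit. Unset Printing Implicit Defensive.
Import Order.TTheory GRing.Theory Num.Theory.

(* A directed network with parallel arcs: vertices V, arcs E (a finite type,
   so parallel arcs are distinct elements), arc a goes from src a to tgt a.
   Unit capacities are implicit (each arc used at most once in arc-disjoint
   families). *)

Definition is_st_path {V E : finType} (src tgt : E -> V) (s t : V)
  (A : pred E) (p : seq E) : bool :=
  match p with
  | [::] => false
  | a :: q => [&& src a == s, tgt (last a q) == t,
                  path (fun b c => tgt b == src c) a q,
                  uniq (src a :: map tgt p) & all A p]
  end.

Definition disj_on {E : finType} (N : {set E}) (F : seq (seq E)) : bool :=
  pairwise (fun p q => ~~ has (fun a => (a \in N) && (a \in q)) p) F.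

Definition arc_disj {E : finType} (F : seq (seq E)) : bool :=
  pairwise (fun p q => ~~ has (fun a => a \in q) p) F.

Definition N_family {V E : finType} (src tgt : E -> V) (s t : V)
  (N : {set E}) (F : seq (seq E)) : bool :=
  all (is_st_path src tgt s t predT) F && disj_on N F.

Definition is_sigmaN {V E : finType} (src tgt : E -> V) (s t : V)
  (N : {set E}) (k : nat) : Prop :=
  (exists F, N_family src tgt s t N F /\ size F = k) /\
  (forall F, N_family src tgt s t N F -> size F <= k).

Definition S_family {V E : finType} (src tgt : E -> V) (s t : V)
  (N S : {set E}) (F : seq (seq E)) : bool :=
  all (is_st_path src tgt s t (fun a => (a \in S) || (a \notin N))) F
  && arc_disj F.

Definition is_gamma {V E : finType} (src tgt : E -> V) (s t : V)
  (N S : {set E}) (k : nat) : Prop :=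
  (exists F, S_family src tgt s t N S F /\ size F = k) /\
  (forall F, S_family src tgt s t N S F -> size F <= k).

Definition is_gtilde {V E : finType} (src tgt : E -> V) (s t : V)
  (N S : {set E}) (k : nat) : Prop :=
  if S == N then is_sigmaN src tgt s t N k else is_gamma src tgt s t N S k.

Definition network_ok {V E : finType} (src tgt : E -> V) (s t : V)
  (N : {set E}) : Prop :=
  (forall p, is_st_path src tgt s t predT p -> has (fun a => a \in N) p) /\
  (forall a : E, exists p, is_st_path src tgt s t predT p /\ a \in p).

(* core of the auxiliary game; x is given on all arcs but only its values
   on N matter *)
Definition in_core {R : realFieldType} {V E : finType} (src tgt : E -> V)
  (s t : V) (N : {set E}) (x : E -> R) : Prop :=
  [/\ (forall i, i \in N -> 0 <= x i),
      (forall k, is_sigmaN src tgt s t N k -> \sum_(i in N) x i = k%:R)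
    & (forall S : {set E}, S \subset N -> forall k,
         is_gtilde src tgt s t N S k -> k%:R <= \sum_(i in S) x i)]%R.

From HB Require Import structures.
From mathcomp Require Import all_boot all_order all_algebra.
From Stdlib Require Import ClassicalEpsilon.
Set Implicit Arguments.
Unset Strict Implicit.
Unset Printing Implicit Defensive.
Import Order.TTheory GRing.Theory Num.Theory.

(* Each path p of the family F routes one unit through its own private arcs
   S_p, and S_p is a proper coalition since it misses e; hence
   x(S_p) >= gamma(S_p) >= 1.  The S_p are pairwise disjoint subsets of
   N \ {e}, so sigma_N = |F| <= x(N \ {e}) = sigma_N - x(e), and x(e) >= 0
   forces x(e) = 0. *)

Lemma bounded_ex_max (P : nat -> Prop) (m : nat) :
  (exists k, P k) -> (forall k, P k -> k <= m) ->
  exists k, P k /\ forall j, P j -> j <= k.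
Proof.
move=> exP ubP.
pose b k := if excluded_middle_informative (P k) then true else false.
have bP k : reflect (P k) (b k).
  by rewrite /b; case: excluded_middle_informative => Pk; constructor.
have exb : exists k, b k by case: exP => k /bP; exists k.
have ubb k : b k -> k <= m by move/bP/ubP.
by case: (ex_maxnP exb ubb) => k /bP Pk maxk; exists k; split=> // j /bP/maxk.
Qed.

Lemma sum_disjoint_sets_le (R : numDomainType) (T : finType) (x : T -> R)
    (A : {set T}) (Ss : seq {set T}) :
  (forall i, i \in A -> 0 <= x i)%R ->
  all (fun S : {set T} => S \subset A) Ss ->
  pairwise (fun S S' : {set T} => [disjoint S & S']) Ss ->
  (\sum_(S <- Ss) \sum_(i in S) x i <= \sum_(i in A) x i)%R.
Proof.
elim: Ss A => [|S Ss IH] A x_ge0 /=.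
  by move=> _ _; rewrite big_nil sumr_ge0.
case/andP=> sSA sSsA /andP[disjS disjSs].
rewrite big_cons [leRHS](big_setID S) /= (setIidPr sSA) lerD // IH //.
- by move=> i /setDP[iA _]; apply: x_ge0.
apply/allP => S' S'Ss; rewrite subsetD (allP sSsA) //= disjoint_sym.
exact: (allP disjS).
Qed.

Section PrivateArcs.

Variables (V E : finType) (src tgt : E -> V) (s t : V) (N : {set E}).

Definition private_arcs (p : seq E) : {set E} := [set a in N | a \in p].

Lemma st_path_neq0 A p : is_st_path src tgt s t A p -> p != [::].
Proof. by case: p. Qed.

Lemma arc_disj_uniq_ohead (F : seq (seq E)) :
  all (fun p => p != [::]) F -> arc_disj F -> uniq (map ohead F).
Proof.
elim: F => //= p F IH /andP[p_neq0 F_neq0] /andP[disj_p disjF].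
rewrite IH // andbT; apply/mapP => -[q qF ohead_pq].
have := allP disj_p q qF; have := allP F_neq0 q qF.
case: p p_neq0 ohead_pq {disj_p} => // a p' _.
by case: q qF => // b q' _ /= [->] _; rewrite inE eqxx.
Qed.

Lemma S_family_size_le S F :
  S_family src tgt s t N S F -> size F <= #|{: option E}|.
Proof.
case/andP=> paths disjF.
have uniq_heads : uniq (map ohead F).
  apply: arc_disj_uniq_ohead disjF; apply/allP => p pF.
  exact: st_path_neq0 (allP paths p pF).
by rewrite -(size_map ohead) -(card_uniqP uniq_heads) max_card.
Qed.

(* [in_core] only constrains a coalition S through the values k with
   [is_gamma .. S k], so gamma(S) has to be shown to exist. *)
Lemma is_gamma_exists S : exists k, is_gamma src tgt s t N S k.
Proof.
pose P k := exists F, S_family src tgt s t N S F /\ size F = k.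
have P0 : exists k, P k by exists 0, [::].
have P_bounded k : P k -> k <= #|{: option E}|.
  by case=> F [SF <-]; apply: S_family_size_le SF.
have [_ [[F [SF <-]] maxF]] := bounded_ex_max P0 P_bounded.
by exists (size F); split=> [|G SG]; [exists F | apply: maxF; exists G].
Qed.

Lemma S_family_private_arcs p :
  is_st_path src tgt s t predT p ->
  S_family src tgt s t N (private_arcs p) [:: p].
Proof.
move=> p_path; rewrite /S_family /= ?andbT.
have on_private : all (fun b => (b \in private_arcs p) || (b \notin N)) p.
  by apply/allP => b bp; rewrite inE bp andbT orbN.
by case: p p_path on_private => //= a q /and5P[-> -> -> -> _].
Qed.

Lemma core_private_arcs_ge1 (R : realFieldType) (x : E -> R) p :
  in_core src tgt s t N x -> is_st_path src tgt s t predT p ->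
  private_arcs p != N -> (1 <= \sum_(i in private_arcs p) x i)%R.
Proof.
case=> _ _ x_coalition p_path p_neqN.
have [k gamma_k] := is_gamma_exists (private_arcs p).
have k_ge1 : 1 <= k := gamma_k.2 _ (S_family_private_arcs p_path).
have sub_N : private_arcs p \subset N by apply/subsetP => a /setIdP[].
apply: le_trans (x_coalition _ sub_N k _); first by rewrite ler1n.
by rewrite /is_gtilde (negbTE p_neqN).
Qed.

Lemma disj_on_private_arcs F :
  disj_on N F ->
  pairwise (fun S S' : {set E} => [disjoint S & S']) (map private_arcs F).
Proof.
rewrite pairwise_map; apply: sub_pairwise => p q /hasPn p_q_disj /=.
rewrite disjoints_subset; apply/subsetP => a /setIdP[aN ap].
by rewrite !inE aN; have := p_q_disj a ap; rewrite aN.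
Qed.

End PrivateArcs.

Theorem lemma7 (R : realFieldType) (V E : finType) (src tgt : E -> V)
  (s t : V) (N : {set E}) (x : E -> R) (e : E) :
  network_ok src tgt s t N ->
  in_core src tgt s t N x ->
  e \in N ->
  (exists F : seq (seq E),
      [/\ N_family src tgt s t N F,
          (forall G, N_family src tgt s t N G -> size G <= size F)
        & all (fun p => e \notin p) F]) ->
  x e = 0%R.
Proof.
move=> _ x_core eN [F [NF maxF e_notinF]].
have [x_ge0 x_N _] := x_core.
have sigmaF : is_sigmaN src tgt s t N (size F) by split; [exists F | exact: maxF].
have private_sub p : p \in F -> private_arcs N p \subset N :\ e.
  move=> pF; apply/subsetP => a /setIdP[aN ap]; rewrite !inE aN andbT.
  by apply: contraTneq ap => ->; apply: (allP e_notinF).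
have F_le : ((size F)%:R <= \sum_(i in N :\ e) x i)%R.
  apply: le_trans (sum_disjoint_sets_le _ _ (disj_on_private_arcs (andP NF).2)).
  - rewrite -sum1_size natr_sum big_map big_seq [leRHS]big_seq.
    apply: ler_sum => p pF; apply: core_private_arcs_ge1 x_core _ _.
      exact: (allP (andP NF).1).
    apply: contraTneq (private_sub p pF) => ->.
    by apply/subsetPn; exists e; rewrite ?inE ?eqxx.
  - by move=> i /setD1P[_ iN]; apply: x_ge0.
  - by apply/allP => _ /mapP[p pF ->]; apply: private_sub.
have := x_N _ sigmaF; rewrite (big_setD1 e eN) /= => sum_N.
apply/eqP; rewrite eq_le x_ge0 // andbT.
by rewrite -(lerD2r (\sum_(i in N :\ e) x i)) add0r sum_N.
Qed.
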